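(* Weak sd-stability does not imply claimwise stability: there exist a set $N$ of $n$ agents and a set $O$ of $n$ objects with strict preferences $\succ_i$ over $O$ and strict priorities $\succ_o$ over $N$, and a random matching $p$ that is weakly sd-stable but not claimwise stable.
   Context: A random matching is an $n\times n$ bistochastic matrix $p=[p(i,o)]$; it is deterministic if entries are in $\{0,1\}$. $p$ is claimwise stable if for each $(i,o)\in N\times O$ and each $j\in N$ with $i\succ_o j$, $\sum_{o':o'\succ_i o}p(i,o')\ge p(j,o)$. For agent $i$ with $o_1\succ_i\dots\succ_i o_n$, $p(i)\succsim_i^{sd}q(i)$ if $\sum_{l=1}^k p(i,o_l)\ge\sum_{l=1}^k q(i,o_l)$ for all $k$, and $p(i)\succ_i^{sd}q(i)$ if additionally $p(i)\neq q(i)$; for object $o$ with $i_1\succ_o\dots\succ_o i_n$, $p(o)\succsim_o^{sd}q(o)$ if $\sum_{l=1}^k p(i_l,o)\ge\sum_{l=1}^k q(i_l,o)$ for all $k$, and $p(o)\succ_o^{sd}q(o)$ if additionally $p(o)\neq q(o)$. $p$ is strongly sd-blocked by $(i,o)$ if there is a deterministic matching $q\ne p$ with $q(i,o)=1$, $q(i)\succ_i^{sd}p(i)$ and $q(o)\succ_o^{sd}p(o)$. $p$ is weakly sd-stable if no pair $(i,o)$ strongly sd-blocks $p$. *)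

From mathcomp Require Import all_boot all_order all_algebra all_fingroup.
From mathcomp Require Export reals.
Set Implicit Arguments. Unset Strict Implicit. Unset Printing Implicit Defensive.
Import Order.TTheory GRing.Theory Num.Theory.
Local Open Scope ring_scope.

(* A strict preference of agent i over objects is encoded by a bijective
   ranking  pref i : {perm 'I_n}  (pref i o = position of o in i's list,
   0 = best):  o >_i o'  iff  pref i o < pref i o'.
   Likewise a strict priority of object o over agents:  prio o : {perm 'I_n},
   i >_o j iff prio o i < prio o j.
   A random matching p : 'M[R]_n has p i o = probability that agent i gets o. *)

Section Defs.
Variable R : numDomainType.
Variable n : nat.
Implicit Types (p q : 'M[R]_n) (pref prio : 'I_n -> {perm 'I_n}).

Definition prefers_obj pref (i : 'I_n) (o o' : 'I_n) : bool :=
  (pref i o < pref i o')%N.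
Definition prefers_agent prio (o : 'I_n) (i j : 'I_n) : bool :=
  (prio o i < prio o j)%N.

Definition bistochastic p : Prop :=
  [/\ forall i o, 0 <= p i o,
      forall i, \sum_(o < n) p i o = 1
    & forall o, \sum_(i < n) p i o = 1].

Definition random_matching p : Prop := bistochastic p.

Definition deterministic p : Prop :=
  bistochastic p /\ forall i o, p i o = 0 \/ p i o = 1.

Definition claimwise_stable pref prio p : Prop :=
  forall (i o j : 'I_n), prefers_agent prio o i j ->
    p j o <= \sum_(o' < n | prefers_obj pref i o' o) p i o'.

Definition sd_agent_ge pref (i : 'I_n) p q : Prop :=
  forall k : nat,
    \sum_(o < n | (pref i o < k)%N) q i o <= \sum_(o < n | (pref i o < k)%N) p i o.
Definition sd_agent_gt pref (i : 'I_n) p q : Prop :=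
  sd_agent_ge pref i p q /\ exists o, p i o != q i o.

Definition sd_obj_ge prio (o : 'I_n) p q : Prop :=
  forall k : nat,
    \sum_(i < n | (prio o i < k)%N) q i o <= \sum_(i < n | (prio o i < k)%N) p i o.
Definition sd_obj_gt prio (o : 'I_n) p q : Prop :=
  sd_obj_ge prio o p q /\ exists i, p i o != q i o.

Definition strongly_sd_blocks pref prio p (i o : 'I_n) : Prop :=
  exists q, [/\ deterministic q, q != p, q i o = 1,
               sd_agent_gt pref i q p & sd_obj_gt prio o q p].

Definition weakly_sd_stable pref prio p : Prop :=
  forall i o : 'I_n, ~ strongly_sd_blocks pref prio p i o.
End Defs.

From mathcomp Require Import all_boot all_order all_algebra all_fingroup.
From mathcomp Require Import reals.
Set Implicit Arguments. Unset Strict Implicit. Unset Printing Implicit Defensive.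
Import Order.TTheory GRing.Theory Num.Theory.
Local Open Scope ring_scope.

(* If (i, o) strongly sd-blocks p through a deterministic q, then q(i) and q(o)
   are point masses at o and at i, and sd-domination over the classes strictly
   above o (resp. i) forces p to put no mass there.  Hence (i, o) cannot block
   as soon as i already receives o for sure, or i receives a better object, or o
   is received by a higher-priority agent, with positive probability.
   Three agents and objects suffice: let agent 1 get object 0 for sure although
   object 0 gives priority to agent 0, whose only better object 2 comes with
   probability 1/2.  Claimwise stability fails, yet every pair is guarded. *)

Section BlockingPairs.
Variables (R : numDomainType) (n : nat).
Implicit Types (p q : 'M[R]_n) (pref prio : 'I_n -> {perm 'I_n}).

Lemma psumr_eq1_eq0 (I : finType) (F : I -> R) x y :
  (forall z, 0 <= F z) -> \sum_z F z = 1 -> F x = 1 -> y != x -> F y = 0.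
Proof.
move=> F_ge0 F_sum1 Fx1 yx; move: F_sum1; rewrite (bigD1 x) //= Fx1.
by rewrite -[RHS]addr0 => /addrI /psumr_eq0P; apply.
Qed.

Lemma sd_le_point_mass_eq0 (I : finType) (r : I -> nat) (F G : I -> R) x :
  (forall z, 0 <= F z) -> (forall z, z != x -> G z = 0) ->
  \sum_(z | (r z < r x)%N) F z <= \sum_(z | (r z < r x)%N) G z ->
  forall z, (r z < r x)%N -> F z = 0.
Proof.
move=> F_ge0 G_point; rewrite [X in _ <= X]big1 => [F_le0|z]; last first.
  by move=> rz; apply: G_point; apply: contraTneq rz => ->; rewrite ltnn.
apply/psumr_eq0P => //; apply/le_anti; rewrite F_le0 sumr_ge0 //.
Qed.

Lemma strongly_sd_blocks_support pref prio p i o :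
  bistochastic p -> strongly_sd_blocks pref prio p i o ->
  [/\ p i o != 1,
      forall o', prefers_obj pref i o' o -> p i o' = 0
    & forall j, prefers_agent prio o j i -> p j o = 0].
Proof.
move=> p_bis [q [[q_bis _] _ qio1 [q_ge_i [o1 q_ne_p]] [q_ge_o _]]].
have [p_ge0 p_row p_col] := p_bis; have [q_ge0 q_row q_col] := q_bis.
have q_row_point o' : o' != o -> q i o' = 0.
  exact: psumr_eq1_eq0 (q_ge0 i) (q_row i) qio1.
have q_col_point j : j != i -> q j o = 0.
  exact: psumr_eq1_eq0 (q_ge0^~ o) (q_col o) qio1.
split.
- apply: contraNneq q_ne_p => pio1; apply/eqP.
  have [->|o1o] := eqVneq o1 o; first by rewrite pio1 qio1.
  by rewrite q_row_point // (psumr_eq1_eq0 (p_ge0 i) (p_row i) pio1).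
- exact: sd_le_point_mass_eq0 (p_ge0 i) q_row_point (q_ge_i _).
- exact: sd_le_point_mass_eq0 (p_ge0^~ o) q_col_point (q_ge_o _).
Qed.

Definition pair_guarded pref prio p i o : Prop :=
  [\/ p i o = 1,
      exists2 o', prefers_obj pref i o' o & p i o' != 0
    | exists2 j, prefers_agent prio o j i & p j o != 0].

Lemma weakly_sd_stable_of_guarded pref prio p :
  bistochastic p -> (forall i o, pair_guarded pref prio p i o) ->
  weakly_sd_stable pref prio p.
Proof.
move=> p_bis guarded i o /(strongly_sd_blocks_support p_bis) [pio_ne1 better higher].
case: (guarded i o) => [pio1|[o' /better->]|[j /higher->]]; rewrite ?eqxx //.
by rewrite pio1 eqxx in pio_ne1.
Qed.

End BlockingPairs.

(* Ranks are [ordS]-shifts of the identity: agent 0 ranks the objects 2, 0, 1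
   and object 2 ranks the agents 2, 0, 1; all other lists are 0, 1, 2. *)
Definition shift_if (b : bool) (x : 'I_3) : 'I_3 := if b then ordS x else x.

Lemma shift_if_inj b : injective (shift_if b).
Proof. by case: b; [exact: ordS_inj | exact: inj_id]. Qed.

Definition ex_pref (i : 'I_3) : {perm 'I_3} := perm (@shift_if_inj (i == ord0)).
Definition ex_prio (o : 'I_3) : {perm 'I_3} := perm (@shift_if_inj (o == ord_max)).

Definition ex_num (i o : 'I_3) : nat :=
  nth 0 (nth [::] [:: [:: 0; 1; 1]; [:: 2; 0; 0]; [:: 0; 1; 1]] i) o.

Definition ex_matching (R : numFieldType) : 'M[R]_3 :=
  \matrix_(i, o) ((ex_num i o)%:R / 2).

Lemma enum_ord3 : enum 'I_3 = [:: ord0; ordS ord0; ord_max].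
Proof. by apply: (inj_map val_inj); rewrite val_enum_ord. Qed.

(* Stated with [shift_if] rather than [ex_pref]/[ex_prio], since applying a
   [perm] does not reduce under [vm_compute]. *)
Lemma ex_num_guarded :
  all (fun i => all (fun o => [|| ex_num i o == 2%N,
     has (fun o' => (shift_if (i == ord0) o' < shift_if (i == ord0) o)%N
                    && (ex_num i o' != 0%N)) (enum 'I_3)
   | has (fun j => (shift_if (o == ord_max) j < shift_if (o == ord_max) i)%N
                   && (ex_num j o != 0%N)) (enum 'I_3)])
   (enum 'I_3)) (enum 'I_3).
Proof. by rewrite enum_ord3; vm_compute. Qed.

Section Example.
Variable R : numFieldType.

Lemma ex_matchingE i o : ex_matching R i o = (ex_num i o)%:R / 2.
Proof. by rewrite mxE. Qed.

Lemma ex_matching_eq0 i o : (ex_matching R i o == 0) = (ex_num i o == 0%N).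
Proof. by rewrite ex_matchingE mulf_eq0 invr_eq0 !pnatr_eq0 orbF. Qed.

Lemma ex_matching_eq1 i o : (ex_matching R i o == 1) = (ex_num i o == 2%N).
Proof.
have two_neq0 : 2%:R != 0 :> R by rewrite pnatr_eq0.
rewrite ex_matchingE; apply/eqP/eqP => [half1|->]; last exact: divff.
apply/eqP; rewrite -(eqr_nat R); apply/eqP.
by rewrite -[LHS](divfK two_neq0) half1 mul1r.
Qed.

Lemma ex_matching_bistochastic : bistochastic (ex_matching R).
Proof.
have sum_half (s : 'I_3 -> nat) : (\sum_k s k)%N = 2%N -> \sum_k (s k)%:R / 2 = 1 :> R.
  by move=> s2; rewrite -mulr_suml -natr_sum s2 divff ?pnatr_eq0.
split=> [i o|i|o]; first by rewrite ex_matchingE divr_ge0 ?ler0n.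
all: under eq_bigr do rewrite ex_matchingE; apply: sum_half.
  by rewrite !big_ord_recr big_ord0; case: i => [[|[|[|]]]].
by rewrite !big_ord_recr big_ord0; case: o => [[|[|[|]]]].
Qed.

Lemma ex_matching_guarded i o : pair_guarded ex_pref ex_prio (ex_matching R) i o.
Proof.
move/allP: ex_num_guarded => /(_ i (mem_enum _ i)) /allP /(_ o (mem_enum _ o)).
rewrite -(ex_matching_eq1 i o) /pair_guarded /prefers_obj /prefers_agent.
case/or3P => [/eqP|/hasP[o' _ /andP[lt nz]]|/hasP[j _ /andP[lt nz]]].
- exact: Or31.
- by apply: Or32; exists o'; rewrite ?permE ?ex_matching_eq0.
- by apply: Or33; exists j; rewrite ?permE ?ex_matching_eq0.
Qed.

Lemma ex_matching_not_claimwise_stable :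
  ~ claimwise_stable ex_pref ex_prio (ex_matching R).
Proof.
move=> /(_ ord0 ord0 (ordS ord0)); rewrite /prefers_agent /prefers_obj !permE.
move=> /(_ isT); rewrite big_mkcond !big_ord_recr big_ord0 /= !permE /=.
by rewrite !ex_matchingE !add0r ler_pM2r ?invr_gt0 ?ltr0n // ler_nat.
Qed.

End Example.

Theorem proposition34 (R : realType) :
  exists (n : nat) (pref prio : 'I_n -> {perm 'I_n}) (p : 'M[R]_n),
    [/\ random_matching p, weakly_sd_stable pref prio p
      & ~ claimwise_stable pref prio p].
Proof.
exists 3%N, ex_pref, ex_prio, (ex_matching R); split.
- exact: ex_matching_bistochastic.
- exact: weakly_sd_stable_of_guarded (ex_matching_bistochastic R) (@ex_matching_guarded R).
- exact: ex_matching_not_claimwise_stable.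
Qed.
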